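(* Let $K>1$ and let $\kappa=(x_i)_{i\in\mathbb Z}$ and $\eta=(y_i)_{i\in\mathbb Z}$ be independent $K$-contracting axes in a geodesic metric space $X$. Then there exists $K'>0$ such that $\operatorname{diam}\big(x_0\cup\pi_\kappa(\eta)\big)<K'$ and $\operatorname{diam}\big(x_0\cup\pi_{\{x_i\}_{i\ge0}}(\{x_i\}_{i\le0})\big)<K'$.
   Context: $X$ is a geodesic metric space. For $A\subseteq X$, $\pi_A(z)=\{a\in A:d(z,a)=d(z,A)\}$ and $\pi_A(B)=\bigcup_{b\in B}\pi_A(b)$. $A$ is $K$-contracting if $\pi_A(z)\ne\emptyset$ for all $z$ and $d(x,y)\le d(x,A)-K$ implies $\operatorname{diam}(\pi_A(x)\cup\pi_A(y))\le K$. A $K$-contracting axis indexed by $\mathbb Z$ is a sequence $(x_i)_{i\in\mathbb Z}$ with $|i-j|/K-K\le d(x_i,x_j)\le K|i-j|+K$ whose image $\{x_i\}$ is $K$-contracting; projections onto it mean onto its image. Sequences $(x_i),(y_i)$ are independent if for every $M>0$ the set $\{(n,m):d(x_n,y_m)<M\}$ is bounded. *)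

From Stdlib Require Import Reals ZArith Lra.
From Coquelicot Require Import Coquelicot.
Open Scope R_scope.

Section Metric.
Variable X : Type.
Variable d : X -> X -> R.

Definition is_metric : Prop :=
  (forall x y, 0 <= d x y) /\
  (forall x y, d x y = 0 <-> x = y) /\
  (forall x y, d x y = d y x) /\
  (forall x y z, d x z <= d x y + d y z).

Definition geodesic : Prop :=
  forall x y, exists g : R -> X,
    g 0 = x /\ g (d x y) = y /\
    forall s t, 0 <= s <= d x y -> 0 <= t <= d x y -> d (g s) (g t) = Rabs (s - t).

Definition setdist (z : X) (A : X -> Prop) : R :=
  real (Glb_Rbar (fun r => exists a, A a /\ r = d z a)).

Definition proj (A : X -> Prop) (z : X) : X -> Prop :=
  fun a => A a /\ d z a = setdist z A.

Definition proj_set (A B : X -> Prop) : X -> Prop :=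
  fun a => exists b, B b /\ proj A b a.

Definition diam_le (S : X -> Prop) (K : R) : Prop :=
  forall a b, S a -> S b -> d a b <= K.

Definition diam_lt (S : X -> Prop) (K : R) : Prop :=
  exists B, B < K /\ diam_le S B.

Definition union (S T : X -> Prop) : X -> Prop := fun a => S a \/ T a.

Definition contracting (K : R) (A : X -> Prop) : Prop :=
  (forall z, exists a, proj A z a) /\
  (forall x y, d x y <= setdist x A - K ->
     diam_le (union (proj A x) (proj A y)) K).

Definition image (x : Z -> X) : X -> Prop := fun p => exists i, p = x i.

Definition contracting_axis (K : R) (x : Z -> X) : Prop :=
  (forall i j, Rabs (IZR (i - j)) / K - K <= d (x i) (x j) /\
               d (x i) (x j) <= K * Rabs (IZR (i - j)) + K) /\
  contracting K (image x).

Definition independent (x y : Z -> X) : Prop :=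
  forall M, 0 < M -> exists N : Z,
    forall n m, d (x n) (y m) < M -> (Z.abs n <= N)%Z /\ (Z.abs m <= N)%Z.

End Metric.

Arguments setdist {X} d z A.
Arguments proj {X} d A z.
Arguments proj_set {X} d A B.
Arguments diam_le {X} d S K.
Arguments diam_lt {X} d S K.
Arguments union {X} S T.
Arguments contracting {X} d K A.
Arguments image {X} x.
Arguments contracting_axis {X} d K x.
Arguments independent {X} d x y.

From Stdlib Require Import Reals ZArith Lra Lia.
From Coquelicot Require Import Coquelicot.
Open Scope R_scope.

(* Walk along a geodesic from z towards a K-contracting set A in steps of
   length d(., A) - K: each step moves the projection by at most K and gains
   at least 2K, so the geodesic enters the 3K-neighbourhood of A at a point
   whose projection is 6K-close to that of z.  Consequently projections are
   coarse nearest points, and geodesics with endpoints near A stay 12K-close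
   to A (Morse property).
   If the projection p of y_m onto the axis of x were far from x_0, the
   geodesic from y_m to x_0 would pass close to both axes near p, which
   independence confines to a bounded part of the axis.  The geodesic from
   x_i (i <= 0) to x_j (j >= 0) tracks the axis of x, so a discrete
   intermediate value argument makes it pass near some x_k with |k| bounded;
   since x_j is a nearest point of the positive half-axis to x_i, this bounds
   d(x_j, x_0). *)

Lemma discrete_crossing (P : nat -> Z -> Prop) (N : nat) (J : R) (i j : Z) :
  0 <= J -> (i <= 0)%Z -> (0 <= j)%Z -> P 0%nat i -> P N j ->
  (forall n, (n <= N)%nat -> exists k, P n k) ->
  (forall n k k', P n k -> P n k' \/ P (S n) k' -> IZR k' <= IZR k + J) ->
  exists n k, P n k /\ Rabs (IZR k) <= J.
Proof.
  intros HJ Hi Hj P0 PN Hex Hstep.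
  assert (Hneg : forall n, (n <= N)%nat ->
            (exists k, P n k /\ (k < 0)%Z) \/ exists n' k, P n' k /\ Rabs (IZR k) <= J).
  { induction n as [|n IH]; intros Hn.
    - destruct (Z_lt_le_dec i 0) as [Hlt | Hge]; [left; eauto |].
      right. exists 0%nat, i. assert (i = 0%Z) as -> by lia. rewrite Rabs_R0. auto.
    - destruct (IH ltac:(lia)) as [[k [Pk Hk]] | Hfound]; [| now right].
      destruct (Hex (S n) Hn) as [k' Pk'].
      destruct (Z_lt_le_dec k' 0) as [Hlt | Hge]; [left; eauto |].
      right. exists (S n), k'. split; [exact Pk' |].
      pose proof (Hstep n k k' Pk (or_intror Pk')).
      apply IZR_lt in Hk. apply IZR_le in Hge. rewrite Rabs_right; lra. }
  destruct (Hneg N (Nat.le_refl N)) as [[k [Pk Hk]] | Hfound]; [| exact Hfound].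
  exists N, j. split; [exact PN |].
  pose proof (Hstep N k j Pk (or_introl PN)).
  apply IZR_lt in Hk. apply IZR_le in Hj. rewrite Rabs_right; lra.
Qed.

Section Metric.

Variables (X : Type) (d : X -> X -> R).
Hypothesis hmet : is_metric X d.
Hypothesis hgeo : geodesic X d.

Lemma dist_ge0 a b : 0 <= d a b.
Proof. apply hmet. Qed.

Lemma dist_xx a : d a a = 0.
Proof. apply hmet. reflexivity. Qed.

Lemma dist_sym a b : d a b = d b a.
Proof. apply hmet. Qed.

Lemma dist_tri a b c : d a c <= d a b + d b c.
Proof. apply hmet. Qed.

Lemma setdist_le (A : X -> Prop) z a : A a -> setdist d z A <= d z a.
Proof.
  intro Ha. unfold setdist.
  destruct (Glb_Rbar_correct (fun r => exists a, A a /\ r = d z a)) as [Hlb _].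
  specialize (Hlb (d z a) (ex_intro _ a (conj Ha eq_refl))).
  destruct (Glb_Rbar _); simpl in *; [exact Hlb | contradiction | apply dist_ge0].
Qed.

Lemma diam_le_union_point (c : X) (S : X -> Prop) (B : R) :
  0 <= B -> (forall p, S p -> d p c <= B) ->
  diam_le d (union (fun p => p = c) S) (2 * B).
Proof.
  intros HB H a b Ha Hb.
  assert (Hc : forall z, union (fun p => p = c) S z -> d z c <= B).
  { intros z [-> | Hz]; [rewrite dist_xx; exact HB | auto]. }
  pose proof (Hc a Ha). pose proof (Hc b Hb).
  pose proof (dist_tri a c b). rewrite (dist_sym c b) in *. lra.
Qed.

Definition isometric_path (g : R -> X) (L : R) : Prop :=
  forall s t, 0 <= s <= L -> 0 <= t <= L -> d (g s) (g t) = Rabs (s - t).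

Lemma isometric_path_dist g L s t :
  isometric_path g L -> 0 <= s <= t -> t <= L -> d (g s) (g t) = t - s.
Proof.
  intros hg Hs Ht. rewrite hg by lra. rewrite Rabs_minus_sym, Rabs_right; lra.
Qed.

Lemma isometric_path_le g L L' :
  L' <= L -> isometric_path g L -> isometric_path g L'.
Proof. intros HL hg s t Hs Ht. apply hg; lra. Qed.

Lemma isometric_path_rev g L :
  isometric_path g L -> isometric_path (fun u => g (L - u)) L.
Proof.
  intros hg s t Hs Ht. rewrite hg by lra.
  replace (L - s - (L - t)) with (- (s - t)) by ring. apply Rabs_Ropp.
Qed.

Section Contracting.

Variables (K : R) (A : X -> Prop).
Hypothesis hK : 0 < K.
Hypothesis hA : contracting d K A.

Lemma entry_point_in_steps g L (hg : isometric_path g L) (hend : A (g L)) :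
  forall (n : nat) t, 0 <= t <= L -> L - t <= INR n * K ->
    3 * K < setdist d (g t) A ->
    exists ts, t <= ts <= L /\ setdist d (g ts) A <= 3 * K /\
      forall r q, proj d A (g t) r -> proj d A (g ts) q ->
        setdist d (g t) A - 3 * K + 2 * d r q <= ts - t.
Proof.
  destruct hA as [Hex Hc].
  induction n as [|n IH]; intros t Ht HLt Hf.
  - simpl in HLt. replace t with L in Hf by lra.
    pose proof (setdist_le A (g L) (g L) hend). rewrite dist_xx in *. lra.
  - set (f := setdist d (g t) A) in *.
    assert (Hf_le : f <= L - t).
    { rewrite <- (isometric_path_dist g L t L) by (auto; lra).
      apply setdist_le, hend. }
    set (t1 := t + f - K).
    assert (Hd1 : d (g t) (g t1) = f - K)
      by (rewrite (isometric_path_dist g L) by (auto; unfold t1; lra); unfold t1; ring).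
    assert (Hproj1 : forall r r1, proj d A (g t) r -> proj d A (g t1) r1 -> d r r1 <= K).
    { intros r r1 Hr Hr1.
      apply (Hc (g t) (g t1) ltac:(fold f; lra)); [left | right]; assumption. }
    destruct (Rle_dec (setdist d (g t1) A) (3 * K)) as [Hle | Hgt].
    + exists t1. split; [unfold t1; lra |]. split; [exact Hle |].
      intros r q Hr Hq. pose proof (Hproj1 r q Hr Hq). unfold t1. lra.
    + rewrite S_INR in HLt.
      destruct (IH t1 ltac:(unfold t1; lra) ltac:(unfold t1; lra) ltac:(lra))
        as [ts [Hts [Hfs Hineq]]].
      exists ts. split; [unfold t1 in Hts; lra |]. split; [exact Hfs |].
      intros r q Hr Hq.
      destruct (Hex (g t1)) as [r1 Hr1].
      pose proof (Hineq r1 q Hr1 Hq). pose proof (Hproj1 r r1 Hr Hr1).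
      pose proof (dist_tri r r1 q). unfold t1 in *. lra.
Qed.

Lemma entry_point g L (hL : 0 <= L) (hg : isometric_path g L) (hend : A (g L)) :
  exists ts, 0 <= ts <= L /\ setdist d (g ts) A <= 3 * K /\
    setdist d (g 0) A - 3 * K <= ts <= setdist d (g 0) A + 9 * K /\
    forall p q, proj d A (g 0) p -> proj d A (g ts) q -> d p q <= 6 * K.
Proof.
  destruct (proj1 hA (g 0)) as [p0 Hp0].
  pose proof (dist_ge0 (g 0) p0) as Hf0. rewrite (proj2 Hp0) in Hf0.
  destruct (Rle_dec (setdist d (g 0) A) (3 * K)) as [Hle | Hgt].
  { exists 0. repeat split; try lra.
    intros p q [_ Hp] [_ Hq]. pose proof (dist_tri p (g 0) q).
    rewrite dist_sym in Hp. lra. }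
  destruct (nfloor_ex (L / K)) as [n [_ Hn]]; [apply Rdiv_le_0_compat; lra |].
  assert (HnK : L - 0 <= INR (S n) * K).
  { rewrite S_INR. apply Rmult_lt_compat_r with (r := K) in Hn; [| exact hK].
    unfold Rdiv in Hn. rewrite Rmult_assoc, Rinv_l, Rmult_1_r in Hn; lra. }
  destruct (entry_point_in_steps g L hg hend (S n) 0 ltac:(lra) HnK ltac:(lra))
    as [ts [Hts [Hfs Hineq]]].
  assert (Hup : forall p q, proj d A (g 0) p -> proj d A (g ts) q ->
                  ts <= setdist d (g 0) A + d p q + 3 * K).
  { intros p q [_ Hp] [_ Hq].
    pose proof (isometric_path_dist g L 0 L hg ltac:(lra) ltac:(lra)).
    pose proof (isometric_path_dist g L ts L hg ltac:(lra) ltac:(lra)).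
    pose proof (dist_tri (g 0) p (g L)). pose proof (dist_tri p q (g L)).
    pose proof (dist_tri q (g ts) (g L)). rewrite (dist_sym q (g ts)) in *. lra. }
  destruct (proj1 hA (g ts)) as [q0 Hq0].
  pose proof (Hineq p0 q0 Hp0 Hq0). pose proof (Hup p0 q0 Hp0 Hq0).
  pose proof (dist_ge0 p0 q0).
  exists ts. repeat split; try lra.
  intros p q Hp Hq. pose proof (Hineq p q Hp Hq). pose proof (Hup p q Hp Hq). lra.
Qed.

Lemma dist_proj_lower z a p :
  A a -> proj d A z p -> setdist d z A + d p a - 12 * K <= d z a.
Proof.
  intros Ha Hp.
  destruct (hgeo z a) as [g [hg0 [hgL hg]]].
  rewrite <- hgL in Ha.
  destruct (entry_point g (d z a) (dist_ge0 z a) hg Ha)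
    as [ts [Hts [Hfs [[Hlo _] Hb]]]].
  rewrite hg0 in *.
  destruct (proj1 hA (g ts)) as [q Hq].
  pose proof (Hb p q Hp Hq).
  pose proof (isometric_path_dist g (d z a) ts (d z a) hg ltac:(lra) ltac:(lra)).
  pose proof (dist_tri p q (g (d z a))). pose proof (dist_tri q (g ts) (g (d z a))).
  destruct Hq as [_ Hq]. rewrite (dist_sym q (g ts)) in *. rewrite hgL in *. lra.
Qed.

Lemma morse_bound g L (hg : isometric_path g L) b1 b2 :
  A b1 -> A b2 -> forall t, 0 <= t <= L ->
  setdist d (g t) A <= d (g 0) b1 + d (g L) b2 + 12 * K.
Proof.
  intros Hb1 Hb2 t Ht.
  destruct (proj1 hA (g t)) as [r Hr].
  pose proof (dist_proj_lower (g t) b1 r Hb1 Hr).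
  pose proof (dist_proj_lower (g t) b2 r Hb2 Hr).
  pose proof (isometric_path_dist g L 0 L hg ltac:(lra) ltac:(lra)).
  pose proof (isometric_path_dist g L 0 t hg ltac:(lra) ltac:(lra)).
  pose proof (isometric_path_dist g L t L hg ltac:(lra) ltac:(lra)).
  pose proof (dist_tri (g t) (g 0) b1). pose proof (dist_tri (g t) (g L) b2).
  pose proof (dist_tri (g 0) b1 (g L)). pose proof (dist_tri b1 b2 (g L)).
  pose proof (dist_tri b1 r b2).
  rewrite (dist_sym b1 r), (dist_sym b2 (g L)), (dist_sym (g t) (g 0)) in *.
  rewrite (dist_sym (g t) (g L)) in *. lra.
Qed.

End Contracting.

Lemma far_proj_close_pair K (hK : 0 < K) (A B : X -> Prop)
  (hA : contracting d K A) (hB : contracting d K B) a b p :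
  A a -> B b -> proj d A b p -> setdist d a B + 30 * K < d p a ->
  exists a' b', A a' /\ B b' /\ d a' b' <= 18 * K /\ d p a' <= 6 * K.
Proof.
  intros Ha Hb Hp Hfar.
  destruct (hgeo b a) as [s [hs0 [hsL hs]]].
  set (L := d b a) in *. assert (HL : 0 <= L) by apply dist_ge0.
  destruct (entry_point K A hK hA s L HL hs ltac:(rewrite hsL; exact Ha))
    as [t1 [Ht1 [Hf1 [[_ Hhi1] Hb1]]]].
  rewrite hs0 in Hhi1, Hb1.
  pose proof (isometric_path_rev s L hs) as htau.
  destruct (entry_point K B hK hB (fun u => s (L - u)) L HL htau
              ltac:(simpl; rewrite Rminus_diag, hs0; exact Hb))
    as [t2 [Ht2 [Hf2 [[_ Hhi2] _]]]].
  simpl in Hf2, Hhi2. rewrite Rminus_0_r, hsL in Hhi2.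
  pose proof (dist_proj_lower K A hK hA b a p Ha Hp) as Hlow. fold L in Hlow.
  (* as d p a is large, the geodesic meets the 3K-neighbourhood of A before that of B *)
  assert (Ht12 : t1 <= L - t2) by lra.
  destruct (proj1 hB (s (L - t2))) as [b2 [Hb2B Hb2]].
  pose proof (isometric_path_le s L (L - t2) ltac:(lra) hs) as hs'.
  pose proof (morse_bound K B hK hB s (L - t2) hs' b b2 Hb Hb2B t1 ltac:(lra)) as Hm.
  rewrite hs0, dist_xx, Hb2 in Hm.
  destruct (proj1 hB (s t1)) as [b' [Hb' Hdb']].
  destruct (proj1 hA (s t1)) as [a' [Ha' Hda']].
  exists a', b'. repeat split; try assumption.
  - pose proof (dist_tri a' (s t1) b'). rewrite (dist_sym a' (s t1)) in *. lra.
  - apply Hb1; [exact Hp | split; assumption].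
Qed.

Section Axis.

Variables (K : R) (x : Z -> X).
Hypothesis hK : 0 < K.
Hypothesis hx : contracting_axis d K x.

Lemma axis_dist_origin_le k : d (x k) (x 0%Z) <= K * Rabs (IZR k) + K.
Proof. pose proof (proj2 (proj1 hx k 0%Z)) as H. rewrite Z.sub_0_r in H. exact H. Qed.

Lemma axis_index_diff_le i j : Rabs (IZR (i - j)) <= K * (d (x i) (x j) + K).
Proof.
  pose proof (proj1 (proj1 hx i j)) as H.
  replace (Rabs (IZR (i - j))) with (K * (Rabs (IZR (i - j)) / K)) by (field; lra).
  apply Rmult_le_compat_l; lra.
Qed.

Lemma axis_path_near_origin g L (hL : 0 <= L) (hg : isometric_path g L) c i j :
  0 <= c -> (i <= 0)%Z -> (0 <= j)%Z -> g 0 = x i -> g L = x j ->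
  (forall t, 0 <= t <= L -> exists k, d (g t) (x k) <= c) ->
  exists t k, 0 <= t <= L /\ d (g t) (x k) <= c /\ Rabs (IZR k) <= K * (2 * c + 1 + K).
Proof.
  intros Hc Hi Hj Hg0 HgL Hnear.
  set (J := K * (2 * c + 1 + K)).
  assert (Hmin : forall n, 0 <= Rmin (INR n) L <= L)
    by (intro n; split; [apply Rmin_glb; [apply pos_INR | exact hL] | apply Rmin_r]).
  set (P := fun n k => d (g (Rmin (INR n) L)) (x k) <= c).
  assert (Hjump : forall n m k k', P n k -> P m k' ->
            d (g (Rmin (INR n) L)) (g (Rmin (INR m) L)) <= 1 -> IZR k' <= IZR k + J).
  { intros n m k k' Hk Hk' Hnm. unfold P in Hk, Hk'.
    pose proof (dist_tri (x k) (g (Rmin (INR n) L)) (x k')) as Htri.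
    pose proof (dist_tri (g (Rmin (INR n) L)) (g (Rmin (INR m) L)) (x k')).
    rewrite (dist_sym (x k) (g (Rmin (INR n) L))) in Htri.
    assert (Hkk : Rabs (IZR (k - k')) <= J).
    { apply (Rle_trans _ _ _ (axis_index_diff_le k k')).
      apply Rmult_le_compat_l; lra. }
    rewrite minus_IZR, Rabs_minus_sym in Hkk.
    pose proof (Rle_abs (IZR k' - IZR k)). lra. }
  destruct (nfloor_ex L hL) as [N [_ HN]].
  destruct (discrete_crossing P (S N) J i j) as [n [k [Pk Hk]]]; try assumption.
  - unfold J. nra.
  - unfold P. rewrite Rmin_left by (simpl; lra). simpl. rewrite Hg0, dist_xx. exact Hc.
  - unfold P. rewrite Rmin_right by (rewrite S_INR; lra). rewrite HgL, dist_xx. exact Hc.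
  - intros n _. apply Hnear, Hmin.
  - intros n k k' Hk [Hk' | Hk']; apply (Hjump _ _ _ _ Hk Hk').
    + rewrite dist_xx. lra.
    + rewrite hg by apply Hmin. rewrite S_INR.
      unfold Rmin. destruct (Rle_dec _ _), (Rle_dec _ _); apply Rabs_le; lra.
  - exists (Rmin (INR n) L), k. auto.
Qed.

End Axis.

Lemma proj_half_axis_bounded K (hK : 0 < K) (x : Z -> X) (hx : contracting_axis d K x) :
  exists B, 0 <= B /\ forall p,
    proj_set d (fun p => exists i, (0 <= i)%Z /\ p = x i)
               (fun p => exists i, (i <= 0)%Z /\ p = x i) p -> d p (x 0%Z) <= B.
Proof.
  set (J := K * (2 * (12 * K) + 1 + K)).
  exists (2 * (K * J + K) + 24 * K). split; [unfold J; nra |].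
  intros p [b [[i [Hi ->]] [[j [Hj ->]] Hpd]]].
  assert (Hnearest : d (x i) (x j) <= d (x i) (x 0%Z))
    by (rewrite Hpd; apply setdist_le; exists 0%Z; split; [lia | reflexivity]).
  destruct (hgeo (x i) (x j)) as [s [hs0 [hsL hs]]].
  assert (Hnear : forall t, 0 <= t <= d (x i) (x j) -> exists k, d (s t) (x k) <= 12 * K).
  { intros t Ht.
    pose proof (morse_bound K (image x) hK (proj2 hx) s _ hs (x i) (x j)
                  (ex_intro _ i eq_refl) (ex_intro _ j eq_refl) t Ht) as Hm.
    rewrite hs0, hsL, !dist_xx in Hm.
    destruct (proj1 (proj2 hx) (s t)) as [q [[k ->] Hq]]. exists k. lra. }
  destruct (axis_path_near_origin K x hK hx s _ (dist_ge0 _ _) hs (12 * K) i j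
              ltac:(lra) Hi Hj hs0 hsL Hnear) as [t [k [Ht [Hk HkJ]]]].
  fold J in HkJ.
  pose proof (isometric_path_dist s (d (x i) (x j)) 0 t hs ltac:(lra) ltac:(lra)).
  pose proof (isometric_path_dist s _ t (d (x i) (x j)) hs ltac:(lra) ltac:(lra)).
  rewrite hs0, hsL in *.
  pose proof (dist_tri (x i) (s t) (x k)). pose proof (dist_tri (x k) (s t) (x j)).
  pose proof (dist_tri (x i) (x k) (x 0%Z)). pose proof (dist_tri (x j) (x k) (x 0%Z)).
  rewrite (dist_sym (x k) (s t)), (dist_sym (x j) (x k)) in *.
  pose proof (axis_dist_origin_le K x hx k).
  assert (K * Rabs (IZR k) <= K * J) by (apply Rmult_le_compat_l; lra).
  lra.
Qed.

Lemma proj_independent_axis_bounded K (hK : 0 < K) (x y : Z -> X)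
  (hx : contracting_axis d K x) (hy : contracting_axis d K y) (hind : independent d x y) :
  exists B, 0 <= B /\ forall p, proj_set d (image x) (image y) p -> d p (x 0%Z) <= B.
Proof.
  destruct (hind (18 * K + 1) ltac:(lra)) as [N HN].
  pose proof (dist_ge0 (x 0%Z) (y 0%Z)).
  assert (0 <= K * Rabs (IZR N)) by (apply Rmult_le_pos; [lra | apply Rabs_pos]).
  exists (d (x 0%Z) (y 0%Z) + 37 * K + K * Rabs (IZR N)). split; [lra |].
  intros p [b [[m ->] Hp]].
  assert (Hxy : setdist d (x 0%Z) (image y) <= d (x 0%Z) (y 0%Z))
    by (apply setdist_le; exists 0%Z; reflexivity).
  destruct (Rle_dec (d p (x 0%Z)) (setdist d (x 0%Z) (image y) + 30 * K))
    as [Hclose | Hfar]; [lra |].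
  destruct (far_proj_close_pair K hK (image x) (image y) (proj2 hx) (proj2 hy)
              (x 0%Z) (y m) p (ex_intro _ 0%Z eq_refl) (ex_intro _ m eq_refl) Hp
              ltac:(lra)) as [a' [b' [[l ->] [[j ->] [Hlj Hpl]]]]].
  destruct (HN l j ltac:(lra)) as [Hl _].
  assert (Rabs (IZR l) <= Rabs (IZR N)).
  { rewrite <- !abs_IZR. apply IZR_le. lia. }
  assert (K * Rabs (IZR l) <= K * Rabs (IZR N)) by (apply Rmult_le_compat_l; lra).
  pose proof (axis_dist_origin_le K x hx l).
  pose proof (dist_tri p (x l) (x 0%Z)). lra.
Qed.

End Metric.

Theorem lemma3p9 (X : Type) (d : X -> X -> R)
  (hmet : is_metric X d) (hgeo : geodesic X d)
  (K : R) (hK : 1 < K) (x y : Z -> X)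
  (hx : contracting_axis d K x) (hy : contracting_axis d K y)
  (hind : independent d x y) :
  exists K' : R, 0 < K' /\
    diam_lt d (union (fun p => p = x 0%Z) (proj_set d (image x) (image y))) K' /\
    diam_lt d (union (fun p => p = x 0%Z)
                 (proj_set d (fun p => exists i, (0 <= i)%Z /\ p = x i)
                             (fun p => exists i, (i <= 0)%Z /\ p = x i))) K'.
Proof.
  assert (hK0 : 0 < K) by lra.
  destruct (proj_independent_axis_bounded X d hmet hgeo K hK0 x y hx hy hind)
    as [B1 [HB1 H1]].
  destruct (proj_half_axis_bounded X d hmet hgeo K hK0 x hx) as [B2 [HB2 H2]].
  exists (2 * (B1 + B2) + 1). split; [lra | split].
  - exists (2 * B1). split; [lra | exact (diam_le_union_point X d hmet _ _ B1 HB1 H1)].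
  - exists (2 * B2). split; [lra | exact (diam_le_union_point X d hmet _ _ B2 HB2 H2)].
Qed.
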